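(* Let $n$ be an integer with $|n|\ne 1$, $n\neq 0$, and let $\{a,b,c,d\}$ be a set of positive integers with the property $D(n)$ such that $n^2\le a<b<c<d$. Then $c>3.88\,a$ and $d>4.89\,c$.
   Context: A set of positive integers $S$ has the property $D(n)$ if $xy+n$ is a perfect square for all distinct $x,y\in S$. *)

From Stdlib Require Import ZArith List.
Open Scope Z_scope.

Definition is_square (z : Z) : Prop := exists m : Z, z = m * m.

Definition has_property_D (n : Z) (S : list Z) : Prop :=
  (forall x, In x S -> 0 < x) /\
  (forall x y, In x S -> In y S -> x <> y -> is_square (x * y + n)).

From Stdlib Require Import ZArith List Lia.
Open Scope Z_scope.

(* If x < y < z is a D(n)-triple with x y + n = r^2, x z + n = s^2, y z + n = t^2,
   put X = n (x + y + z) + 2 x y z.  The integers e = X - 2 r s t and f = X + 2 r s t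
   satisfy e + f = 2 X and e f = n^2 ((z - x - y)^2 - 4 (x y + n)).  As f > 0, this
   discriminant is either 0 (the regular triple z = x + y +- 2 r) or n^2 times it is
   at least 2 X - 1 ~ 4 x y z in absolute value.  When n^2 <= x the negative case is
   impossible and the positive one forces z > 5 y.  Hence c > 3 a + b; and since the
   discriminant strictly decreases in the smallest element, that of {a, c, d} exceeds
   that of {b, c, d}, so {a, c, d} is not regular and d > 5 c. *)

Definition triple_disc (n x y z : Z) : Z :=
  (z - x - y) * (z - x - y) - 4 * (x * y + n).

Lemma triple_disc_identity (n x y z : Z) :
  (n * (x + y + z) + 2 * x * y * z) * (n * (x + y + z) + 2 * x * y * z)
    - 4 * ((x * y + n) * (x * z + n) * (y * z + n))
  = n * n * triple_disc n x y z.
Proof. unfold triple_disc; ring. Qed.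

Lemma triple_disc_lt (n w w' y z : Z) :
  0 <= y -> w < w' -> w' <= z - y -> triple_disc n w' y z < triple_disc n w y z.
Proof.
  intros Hy Hw Hw'; unfold triple_disc.
  assert (Hpos : 0 < (w' - w) * (2 * (z - y) - w - w' + 4 * y)) by nia.
  nia.
Qed.

Lemma is_square_nonneg_root (m : Z) : is_square m -> exists r, 0 <= r /\ m = r * r.
Proof. intros [r ->]; exists (Z.abs r); split; [lia | nia]. Qed.

Lemma has_property_D_incl {n : Z} {S T : list Z} :
  has_property_D n S -> incl T S -> has_property_D n T.
Proof. intros [Hpos Hsq] HTS; split; auto. Qed.

Lemma Z_add_pred_le_mul (e f : Z) : 1 <= e -> 1 <= f -> e + f - 1 <= e * f.
Proof. nia. Qed.

Section DiophantineTriple.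

Context {n x y z : Z}.
Hypotheses (n_abs : 2 <= Z.abs n) (nn_le_x : n * n <= x) (x_lt_y : x < y) (y_lt_z : y < z).
Hypothesis D_xyz : has_property_D n (x :: y :: z :: nil).

Let x_ge_4 : 4 <= x.
Proof. assert (2 * 2 <= Z.abs n * Z.abs n) by nia. rewrite <- Z.abs_mul in *. lia. Qed.

Let X := n * (x + y + z) + 2 * x * y * z.

Let n_bound : - x <= 2 * n <= x.
Proof. nia. Qed.

Let X_pos : 0 < X.
Proof.
  unfold X.
  assert (0 <= (x + 2 * n) * (x + y + z)) by (apply Z.mul_nonneg_nonneg; lia).
  assert (x + y + z < 4 * (y * z)) by nia.
  assert (x * (x + y + z) < x * (4 * (y * z))) by (apply Z.mul_lt_mono_pos_l; nia).
  nia.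
Qed.

Let disc_factor :
  exists e f, X <= f /\ e + f = 2 * X /\ e * f = n * n * triple_disc n x y z.
Proof.
  destruct D_xyz as [_ Hsq].
  assert (Hroot : forall u v, In u (x :: y :: z :: nil) -> In v (x :: y :: z :: nil) ->
            u < v -> exists r, 0 <= r /\ u * v + n = r * r).
  { intros u v Hu Hv Huv; apply is_square_nonneg_root, Hsq; auto; lia. }
  destruct (Hroot x y ltac:(simpl; auto) ltac:(simpl; auto) x_lt_y) as [r [Hr Er]].
  destruct (Hroot x z ltac:(simpl; auto) ltac:(simpl; auto) ltac:(lia)) as [s [Hs Es]].
  destruct (Hroot y z ltac:(simpl; auto) ltac:(simpl; auto) y_lt_z) as [t [Ht Et]].
  exists (X - 2 * (r * s * t)), (X + 2 * (r * s * t)).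
  assert (0 <= r * s * t) by (apply Z.mul_nonneg_nonneg; [apply Z.mul_nonneg_nonneg|]; lia).
  split; [lia | split; [lia |]].
  rewrite <- triple_disc_identity, Er, Es, Et; unfold X; ring.
Qed.

Lemma triple_disc_pos_bound :
  0 < triple_disc n x y z -> 2 * X - 1 <= n * n * triple_disc n x y z.
Proof.
  intros Hd; destruct disc_factor as (e & f & Hf & Hsum & Hprod).
  assert (0 < n * n * triple_disc n x y z) by nia.
  assert (1 <= e) by nia.
  pose proof (Z_add_pred_le_mul e f). lia.
Qed.

Lemma triple_disc_neg_bound :
  triple_disc n x y z < 0 -> n * n * triple_disc n x y z <= - (2 * X + 1).
Proof.
  intros Hd; destruct disc_factor as (e & f & Hf & Hsum & Hprod).
  assert (n * n * triple_disc n x y z < 0) by nia.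
  assert (e <= -1) by nia.
  nia.
Qed.

Let X_lower : x * (4 * (y * z) - x - y - z) <= 2 * X.
Proof.
  unfold X.
  assert (0 <= (x + 2 * n) * (x + y + z)) by (apply Z.mul_nonneg_nonneg; lia).
  lia.
Qed.

Let size_gap : 4 * (x * y) + 3 * x + y + z <= 4 * (y * z).
Proof.
  assert (x + 2 <= z) by lia.
  assert ((x + 2) * (4 * y - 1) <= z * (4 * y - 1)) by (apply Z.mul_le_mono_nonneg_r; lia).
  lia.
Qed.

Lemma triple_disc_nonneg : 0 <= triple_disc n x y z.
Proof.
  apply Z.nlt_ge; intros Hd.
  pose proof (triple_disc_neg_bound Hd) as Hneg.
  assert (Hsq : 0 <= n * n * ((z - x - y) * (z - x - y)))
    by (apply Z.mul_nonneg_nonneg; apply Z.square_nonneg).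
  unfold triple_disc in *.
  (* 2 X + 1 <= - n^2 disc <= 4 n^2 (x y + n) <= 4 x^2 y + 2 x^2, too small for X ~ 2 x y z *)
  assert (n * n * (x * y) <= x * (x * y))
    by (apply Z.mul_le_mono_nonneg_r; [apply Z.mul_nonneg_nonneg |]; lia).
  assert (2 * n * (n * n) <= x * x).
  { pose proof (Z.square_nonneg n).
    transitivity (x * (n * n));
      [apply Z.mul_le_mono_nonneg_r | apply Z.mul_le_mono_nonneg_l]; lia. }
  assert (0 <= x * (4 * (y * z) - 4 * (x * y) - 3 * x - y - z))
    by (apply Z.mul_nonneg_nonneg; lia).
  lia.
Qed.

Lemma triple_lower_bound : 3 * x + y < z.
Proof.
  pose proof triple_disc_nonneg as Hd; unfold triple_disc in Hd.
  assert (x * (x + 1) <= x * y) by (apply Z.mul_le_mono_nonneg_l; lia).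
  assert (Hsq : (2 * x) * (2 * x) < (z - x - y) * (z - x - y)) by lia.
  destruct (Z.le_gt_cases 0 (z - x - y)).
  - assert (2 * x < z - x - y) by (apply Z.square_lt_simpl_nonneg; lia). lia.
  - assert ((x + y - z) * (x + y - z) < (2 * x) * (2 * x))
      by (apply Z.mul_lt_mono_nonneg; lia).
    lia.
Qed.

Lemma irregular_triple_gap :
  0 < triple_disc n x y z -> (4 * y - 1) * z < (z - x - y) * (z - x - y).
Proof.
  intros Hd.
  pose proof (triple_disc_pos_bound Hd) as Hpos.
  assert (n * n * triple_disc n x y z <= x * triple_disc n x y z)
    by (apply Z.mul_le_mono_nonneg_r; lia).
  unfold triple_disc in *.
  assert (0 <= x * (x + 2 * n)) by (apply Z.mul_nonneg_nonneg; lia).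
  assert (4 * (4 * y - 3) <= x * (4 * y - 3)) by (apply Z.mul_le_mono_nonneg_r; lia).
  assert (x * 1 <= x * (4 * (x * y) - 3 * x - y)) by (apply Z.mul_le_mono_nonneg_l; lia).
  pose proof X_lower; unfold X in *.
  assert (Hx : x * ((4 * y - 1) * z) < x * ((z - x - y) * (z - x - y))) by lia.
  apply Z.mul_lt_mono_pos_l in Hx; lia.
Qed.

Lemma irregular_triple_far : 0 < triple_disc n x y z -> 5 * y < z.
Proof.
  intros Hd; pose proof (irregular_triple_gap Hd) as Hgap.
  assert (Hxy : x + y < z).
  { apply Z.nle_gt; intros Hle.
    assert ((x + y - z) * (x + y - z) <= x * x) by (apply Z.mul_le_mono_nonneg; lia).
    assert (x * x <= (4 * y - 1) * z) by (apply Z.mul_le_mono_nonneg; lia).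
    lia. }
  assert ((z - x - y) * (z - x - y) < (z - y) * (z - y)) by (apply Z.mul_lt_mono_nonneg; lia).
  apply Z.nle_gt; intros Hle.
  assert (0 <= (z - y) * (5 * y - z)) by (apply Z.mul_nonneg_nonneg; lia).
  assert (y * 5 < y * (4 * y)) by (apply Z.mul_lt_mono_pos_l; lia).
  lia.
Qed.

End DiophantineTriple.

Theorem lemma5 (n a b c d : Z) :
  Z.abs n <> 1 -> n <> 0 ->
  has_property_D n (a :: b :: c :: d :: nil) ->
  n * n <= a -> a < b -> b < c -> c < d ->
  100 * c > 388 * a /\ 100 * d > 489 * c.
Proof.
  intros Hn1 Hn0 HD Ha Hab Hbc Hcd.
  assert (Hn : 2 <= Z.abs n) by lia.
  assert (Hb : n * n <= b) by lia.
  assert (Dabc : has_property_D n (a :: b :: c :: nil))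
    by (apply (has_property_D_incl HD); intros u; simpl; tauto).
  assert (Dacd : has_property_D n (a :: c :: d :: nil))
    by (apply (has_property_D_incl HD); intros u; simpl; tauto).
  assert (Dbcd : has_property_D n (b :: c :: d :: nil))
    by (apply (has_property_D_incl HD); intros u; simpl; tauto).
  pose proof (triple_lower_bound Hn Ha Hab Hbc Dabc) as Hc.
  pose proof (triple_lower_bound Hn Hb Hbc Hcd Dbcd) as Hd.
  assert (Hirr : 0 < triple_disc n a c d).
  { apply (Z.le_lt_trans _ (triple_disc n b c d)).
    - exact (triple_disc_nonneg Hn Hb Hbc Hcd Dbcd).
    - apply triple_disc_lt; lia. }
  pose proof (irregular_triple_far Hn Ha (Z.lt_trans _ _ _ Hab Hbc) Hcd Dacd Hirr).
  lia.
Qed.
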